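(* Let $\mathcal{N} = (W,(R_{a})_{a\in Ag},(Q_{a})_{a \in Ag},v)$ be a proper relational model for introspective knowledge and belief over $Ag$, and let $\mathcal{M}_{\mathcal{N}}$ and $f: W \to \mathcal{F}(S_{\mathcal{N}})$ be as constructed below. Then for all formulas $\phi \in \mathcal{L}_{KB}(Ag)$ and all $w \in W$: $\mathcal{N},w\models\phi$ if and only if $\mathcal{M}_{\mathcal{N}},f(w)\models\phi$.
   Context: $Ag$ is a finite set of agents, $\mathfrak{P}$ a countable set of atoms. A relational model for introspective knowledge and belief is $(W,(R_{a}),(Q_{a}),v)$ with $W$ nonempty, each $R_{a}$ an equivalence relation on $W$ (class of $w$ written $[w]_{a}$), each $Q_{a} \subseteq R_{a}$ serial and constant on $R_{a}$-classes (if $wR_{a}w'$ then $Q_{a}(w)=Q_{a}(w')$, where $Q_{a}(w)=\{u : wQ_{a}u\}$), and $v:\mathfrak{P}\to 2^{W}$. It is proper if $|\bigcap_{a\in Ag}[w]_{a}|=1$ for all $w$. Relational semantics: $w\models P$ iff $w\in v(P)$; $\bot$ false; implication classical; $w\models K_{a}\phi$ iff $w'\models\phi$ for all $w'$ with $wR_{a}w'$; $w\models B_{a}\phi$ iff $w'\models\phi$ for all $w'$ with $wQ_{a}w'$. Construction: $N_{\mathcal{N}}=\{([w]_{a},a): w\in W, a\in Ag\}$; $V_{\mathcal{N}}([w]_{a},a)=a$; $e$ is projection to the first coordinate; $S_{\mathcal{N}}=\{F\subseteq N_{\mathcal{N}} : \bigcap_{n\in F}e(n)\neq\emptyset\}$;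 $f(w)=\{([w]_{a},a): a\in Ag\}$, which is a bijection $W\to\mathcal{F}(S_{\mathcal{N}})$ by properness; $L_{\mathcal{N}}(P)=\{f(w): w\in v(P)\}$; for each $a$, $S_{\mathcal{N},a}$ is the simplicial complex whose facets are $\{F\in\mathcal{F}(S_{\mathcal{N}}) : f^{-1}(F)\,Q_{a}\,f^{-1}(F)\}$ (i.e. all subsets of these facets); $\mathcal{M}_{\mathcal{N}}=(N_{\mathcal{N}},V_{\mathcal{N}},S_{\mathcal{N}},\{S_{\mathcal{N},a}\}_{a\in Ag},L_{\mathcal{N}})$. Simplicial semantics at a facet $X$ of $S_{\mathcal{N}}$, with $\pi_{a}(X)$ the unique $a$-colored node of $X$: $X\models P$ iff $X\in L_{\mathcal{N}}(P)$; $\bot$ false; implication classical; $X\models K_{a}\phi$ iff $Y\models\phi$ for all facets $Y$ of $S_{\mathcal{N}}$ with $\pi_{a}(Y)=\pi_{a}(X)$; $X\models B_{a}\phi$ iff $Y\models\phi$ for all facets $Y$ of $S_{\mathcal{N},a}$ with $\pi_{a}(Y)=\pi_{a}(X)$. The language $\mathcal{L}_{KB}(Ag)$ is $\phi ::= P\mid\bot\mid\phi\rightarrow\psi\mid K_{a}\phi\mid B_{a}\phi$. *)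

From mathcomp Require Import all_boot.
Unset Printing Implicit Defensive.

Inductive formula (Ag : Type) (Atom : Type) : Type :=
  | fAtom : Atom -> formula Ag Atom
  | fBot : formula Ag Atom
  | fImp : formula Ag Atom -> formula Ag Atom -> formula Ag Atom
  | fK : Ag -> formula Ag Atom -> formula Ag Atom
  | fB : Ag -> formula Ag Atom -> formula Ag Atom.
Arguments fBot {Ag Atom}.

Record relmodel (Ag : finType) (Atom : countType) := RelModel {
  rW : Type;
  rW_nonempty : inhabited rW;
  rR : Ag -> rW -> rW -> Prop;
  rQ : Ag -> rW -> rW -> Prop;
  rv : Atom -> rW -> Prop;
  rR_refl : forall a w, rR a w w;
  rR_sym : forall a w u, rR a w u -> rR a u w;
  rR_trans : forall a w u x, rR a w u -> rR a u x -> rR a w x;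
  rQ_sub : forall a w u, rQ a w u -> rR a w u;
  rQ_serial : forall a w, exists u, rQ a w u;
  rQ_const : forall a w w', rR a w w' -> forall u, rQ a w u <-> rQ a w' u
}.
Arguments rW {Ag Atom} _.
Arguments rR {Ag Atom} _ _ _ _.
Arguments rQ {Ag Atom} _ _ _ _.
Arguments rv {Ag Atom} _ _ _.

Definition rclass {Ag : finType} {Atom : countType} (N : relmodel Ag Atom)
  (a : Ag) (w : rW N) : rW N -> Prop := fun u => rR N a w u.

Definition proper_model {Ag : finType} {Atom : countType} (N : relmodel Ag Atom) : Prop :=
  forall w : rW N, exists! u : rW N, forall a : Ag, rclass N a w u.

Fixpoint rsat {Ag : finType} {Atom : countType} (N : relmodel Ag Atom)
  (w : rW N) (phi : formula Ag Atom) : Prop :=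
  match phi with
  | fAtom P => rv N P w
  | fBot => False
  | fImp p q => rsat N w p -> rsat N w q
  | fK a p => forall w', rR N a w w' -> rsat N w' p
  | fB a p => forall w', rQ N a w w' -> rsat N w' p
  end.

(* A (chromatic) simplicial model with nodes of type sN, coloring sV,
   complex sS (a set of simplices, a simplex being a set of nodes),
   per-agent subcomplexes sSa, and valuation sL (a set of facets per atom). *)
Record simpmodel (Ag : finType) (Atom : countType) := SimpModel {
  sN : Type;
  sV : sN -> Ag;
  sS : (sN -> Prop) -> Prop;
  sSa : Ag -> (sN -> Prop) -> Prop;
  sL : Atom -> (sN -> Prop) -> Prop
}.
Arguments sN {Ag Atom} _.
Arguments sV {Ag Atom} _ _.
Arguments sS {Ag Atom} _ _.
Arguments sSa {Ag Atom} _ _ _.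
Arguments sL {Ag Atom} _ _ _.

Definition subset_of {T : Type} (X Y : T -> Prop) : Prop := forall x, X x -> Y x.

Definition facet {T : Type} (C : (T -> Prop) -> Prop) (X : T -> Prop) : Prop :=
  C X /\ forall Y, C Y -> subset_of X Y -> subset_of Y X.

(* pi_a(X) = pi_a(Y): X and Y have the same (unique) a-colored node,
   i.e. they share an a-colored node. *)
Definition same_pi {Ag : finType} {Atom : countType} (M : simpmodel Ag Atom)
  (a : Ag) (X Y : sN M -> Prop) : Prop :=
  exists n : sN M, sV M n = a /\ X n /\ Y n.

Fixpoint ssat {Ag : finType} {Atom : countType} (M : simpmodel Ag Atom)
  (X : sN M -> Prop) (phi : formula Ag Atom) : Prop :=
  match phi with
  | fAtom P => sL M P X
  | fBot => False
  | fImp p q => ssat M X p -> ssat M X q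
  | fK a p => forall Y, facet (sS M) Y -> same_pi M a Y X -> ssat M Y p
  | fB a p => forall Y, facet (sSa M a) Y -> same_pi M a Y X -> ssat M Y p
  end.

Section Construction.
Variables (Ag : finType) (Atom : countType) (N : relmodel Ag Atom).

Definition cnode : Type :=
  { p : (rW N -> Prop) * Ag | exists w : rW N, p.1 = rclass N p.2 w }.

Definition cV (n : cnode) : Ag := (sval n).2.
Definition ce (n : cnode) : rW N -> Prop := (sval n).1.

Definition cS (F : cnode -> Prop) : Prop :=
  exists w : rW N, forall n, F n -> ce n w.

Definition cf (w : rW N) : cnode -> Prop := fun n => sval n = (rclass N (cV n) w, cV n).

Definition cL (P : Atom) (X : cnode -> Prop) : Prop :=
  exists w, rv N P w /\ X = cf w.

(* S_{N,a}: all subsets of the facets F of S_N with f^{-1}(F) Q_a f^{-1}(F)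
   (f is a bijection W -> F(S_N), so f^{-1}(F) Q_a f^{-1}(F) means
    F = f(w) for some w with w Q_a w) *)
Definition cSa (a : Ag) (G : cnode -> Prop) : Prop :=
  exists F, facet cS F /\ (exists w, F = cf w /\ rQ N a w w) /\ subset_of G F.

Definition MN : simpmodel Ag Atom := @SimpModel Ag Atom cnode cV cS cSa cL.
End Construction.
Arguments cf {Ag Atom} _ _ _.
Arguments MN {Ag Atom} _.

(* Properness makes f injective, and then f is a bijection from W onto the
   facets of S_N; f(u) and f(w) share their a-colored node exactly when
   w R_a u, and the facets of S_{N,a} are the f(u) with u Q_a u.  Since Q_a is
   contained in R_a and constant on R_a-classes, w Q_a u holds iff w R_a u and
   u Q_a u, so on both sides K_a and B_a quantify over the same worlds, and the
   theorem follows by induction on the formula. *)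
From Stdlib Require Import FunctionalExtensionality PropExtensionality.
From mathcomp Require Import all_boot.

Arguments rR_refl {Ag Atom} r a w.
Arguments rR_sym {Ag Atom r a w u}.
Arguments rR_trans {Ag Atom r a w u x}.
Arguments rQ_sub {Ag Atom r a w u}.
Arguments rQ_const {Ag Atom r a w w'} _ u.

Lemma subset_of_antisym (T : Type) (X Y : T -> Prop) :
  subset_of X Y -> subset_of Y X -> X = Y.
Proof.
move=> XY YX; apply: functional_extensionality => x.
by apply: propositional_extensionality; split; [apply: XY | apply: YX].
Qed.

Section Construction.
Context {Ag : finType} {Atom : countType} {N : relmodel Ag Atom}.

Local Notation node := (cnode Ag Atom N).
Local Notation cS := (cS Ag Atom N).
Local Notation cSa := (cSa Ag Atom N).
Local Notation f := (cf N).

Lemma rclass_eqP a w u : rclass N a w = rclass N a u <-> rR N a w u.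
Proof.
split=> [E | Rwu].
  by rewrite -[rR N a w u]/(rclass N a w u) E; exact: rR_refl N a u.
apply: subset_of_antisym => x; rewrite /rclass => Rx.
  by apply: rR_trans (rR_sym Rwu) Rx.
by apply: rR_trans Rwu Rx.
Qed.

Lemma rQ_introspective a w u : rQ N a w u <-> rR N a w u /\ rQ N a u u.
Proof.
split=> [Qwu | [Rwu Quu]]; last by apply/(rQ_const Rwu).
have Rwu := rQ_sub Qwu.
by split=> //; apply/(rQ_const Rwu).
Qed.

Definition class_node (a : Ag) (w : rW N) : node :=
  exist _ (rclass N a w, a) (ex_intro _ w erefl).

Lemma cS_cf w : cS (f w).
Proof. by exists w => n; rewrite /cf /ce => ->; exact: rR_refl N _ w. Qed.

Lemma subset_cf_of_ce (F : node -> Prop) x :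
  (forall n, F n -> ce Ag Atom N n x) -> subset_of F (f x).
Proof.
move=> Fx [[S b] [z /= Sz]] /Fx; rewrite /ce /cf /cV /= Sz => Rzx.
by have -> : rclass N b z = rclass N b x by apply/rclass_eqP.
Qed.

Lemma same_pi_cfP a u w : same_pi (MN N) a (f u) (f w) <-> rR N a w u.
Proof.
split=> [[n [<- [fu fw]]] | Rwu].
  by move: fw; rewrite /cf fu => -[/rclass_eqP /rR_sym].
exists (class_node a w); split=> //; split=> //.
by rewrite /cf /=; have -> : rclass N a w = rclass N a u by apply/rclass_eqP.
Qed.

Hypothesis N_proper : proper_model N.

Lemma cf_subset_inj w u : subset_of (f w) (f u) -> w = u.
Proof.
move=> wu; have Rwu a : rR N a w u.
  by have [/rclass_eqP] := wu (class_node a w) erefl.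
have [z [_ z_uniq]] := N_proper w.
by rewrite -(z_uniq w (fun a => rR_refl N a w)) (z_uniq u Rwu).
Qed.

Lemma facet_cf u : facet cS (f u).
Proof.
split=> [|Y [x /subset_cf_of_ce Yx] uY]; first exact: cS_cf.
have ux : u = x by apply: cf_subset_inj => n /uY /Yx.
by rewrite ux.
Qed.

Lemma facet_cSP F : facet cS F <-> exists u, F = f u.
Proof.
split=> [[[x /subset_cf_of_ce Fx] F_max] | [u ->]]; last exact: facet_cf.
by exists x; apply: subset_of_antisym => //; apply: F_max (cS_cf x) Fx.
Qed.

Lemma cSa_cf a u : rQ N a u u -> cSa a (f u).
Proof.
by move=> Quu; exists (f u); split; [apply: facet_cf | split; [exists u |]].
Qed.

Lemma facet_cSaP a F : facet (cSa a) F <-> exists u, F = f u /\ rQ N a u u.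
Proof.
split=> [[[_ [_ [[x [-> Qxx]] Fx]]] F_max] | [u [-> Quu]]].
  exists x; split=> //.
  by apply: subset_of_antisym => //; apply: F_max (cSa_cf _ _ Qxx) Fx.
split=> [|Y [_ [_ [[y [-> _]] Yy]]] uY]; first exact: cSa_cf.
have uy : u = y by apply: cf_subset_inj => n /uY /Yy.
by rewrite uy.
Qed.

Lemma cL_cfP P w : cL Ag Atom N P (f w) <-> rv N P w.
Proof.
split=> [[u [vu fwu]] | vw]; last by exists w.
by rewrite (cf_subset_inj w u) // fwu.
Qed.

Lemma forall_facet_same_pi {C : (node -> Prop) -> Prop} {D : rW N -> Prop} :
    (forall F, facet C F <-> exists u, F = f u /\ D u) ->
  forall (Q : (node -> Prop) -> Prop) a w,
  (forall Y, facet C Y -> same_pi (MN N) a Y (f w) -> Q Y) <->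
  (forall u, rR N a w u -> D u -> Q (f u)).
Proof.
move=> facetP Q a w.
split=> [QY u Rwu Du | Qu Y /facetP [u [-> Du]] /same_pi_cfP Rwu].
  by apply: QY; [apply/facetP; exists u | apply/same_pi_cfP].
exact: Qu.
Qed.

End Construction.

Theorem lemma6 (Ag : finType) (Atom : countType) (N : relmodel Ag Atom) :
  proper_model N ->
  forall (phi : formula Ag Atom) (w : rW N),
    rsat N w phi <-> ssat (MN N) (cf N w) phi.
Proof.
move=> N_proper phi; elim: phi => [P | | p IHp q IHq | a p IHp | a p IHp] w /=.
- by rewrite (cL_cfP N_proper).
- by [].
- by rewrite IHp IHq.
- rewrite (@forall_facet_same_pi _ _ _ _ (fun=> True)); last first.
    move=> F; rewrite (facet_cSP N_proper).
    by split=> [[u ->] | [u [-> _]]]; exists u.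
  by split=> H u Rwu => [_ |]; apply/IHp; apply: H.
- rewrite (forall_facet_same_pi (facet_cSaP N_proper a)).
  split=> H u => [Rwu Quu | /rQ_introspective [Rwu Quu]];
    apply/IHp; apply: H => //.
  exact/rQ_introspective.
Qed.
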